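(* Let $(V,q)$ be a Minkowski space and let $\|\cdot\|$ be an arbitrary norm on $V$. There exists a constant $M>0$ such that for all $x,y\in V$ there exists $z\in\mathcal{C}(x)\cap\mathcal{C}(y)$ with $\|z-x\|\le M\,\|y-x\|$.
   Context: A Minkowski space is a pair $(V,q)$ where $V$ is a finite-dimensional real vector space of dimension $n>1$ and $q$ is a quadratic form on $V$ of signature $(1,n-1)$. For $a\in V$, $\mathcal{C}(a)=\{m\in V: q(m-a)=0\}$. *)

From HB Require Import structures.
From mathcomp Require Import all_boot all_order all_algebra.
From mathcomp Require Import reals.
Set Implicit Arguments. Unset Strict Implicit. Unset Printing Implicit Defensive.
Import Order.TTheory GRing.Theory Num.Theory.
Local Open Scope ring_scope.

(* V is modelled as R^n = 'rV[R]_n (any n-dim real vector space is linearly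
   isomorphic to it); a quadratic form on R^n is v |-> v A v^T for a unique
   symmetric matrix A. *)
Definition qform (R : realType) (n : nat) (A : 'M[R]_n) (v : 'rV[R]_n) : R :=
  (v *m A *m v^T) 0 0.

Definition minkowski_diag (R : realType) (n : nat) : 'M[R]_n :=
  diag_mx (\row_(i < n) (if (i : nat) == 0%N then 1 else -1)).

(* The quadratic form with symmetric matrix A has signature (1, n-1):
   it is congruent to diag(1,-1,...,-1) (Sylvester). *)
Definition signature_1_nm1 (R : realType) (n : nat) (A : 'M[R]_n) : Prop :=
  A^T = A /\
  exists P : 'M[R]_n, P \in unitmx /\ P *m A *m P^T = minkowski_diag R n.

Definition is_norm (R : realType) (n : nat) (N : 'rV[R]_n -> R) : Prop :=
  (forall x, N x = 0 -> x = 0) /\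
  (forall (a : R) x, N (a *: x) = `|a| * N x) /\
  (forall x y, N (x + y) <= N x + N y).

Definition light_cone (R : realType) (n : nat) (A : 'M[R]_n) (a : 'rV[R]_n)
  : 'rV[R]_n -> Prop := fun m => qform A (m - a) = 0.

From HB Require Import structures.
From mathcomp Require Import all_boot all_order all_algebra.
From mathcomp Require Import all_classical all_reals all_analysis.
From mathcomp Require Import ring lra.

Set Implicit Arguments.
Unset Strict Implicit.
Unset Printing Implicit Defensive.
Import Order.TTheory GRing.Theory Num.Theory.
Import numFieldNormedType.Exports.

Local Open Scope ring_scope.

(* Congruence to diag(1,-1,...,-1) reduces everything to q(v) = v_0^2 - |v'|^2,
   and since all norms on R^n are equivalent it suffices to find, for each
   difference e = y - x, a vector u with q(u) = q(u - e) = 0 whose coordinates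
   are bounded by a multiple of those of e.  Writing e = (a, b) with r = |b|,
   take u = (-sgn(a) mu, mu b/r) with mu = (r - |a|)/2 (any unit vector in
   place of b/r when b = 0): then q(u) = 0, and
   q(u - e) = q(e) - 2B(u, e) = (a^2 - r^2) + 2 mu (|a| + r) = 0,
   while |mu| <= (r + |a|)/2 is controlled by the coordinates of e. *)

Section NormFunctions.
Variables (R : realType) (n : nat) (N : 'rV[R]_n -> R).
Hypothesis hN : is_norm N.

Lemma norm_fun0 : N 0 = 0.
Proof.
case: hN => _ [hZ _].
by rewrite -(scale0r (0 : 'rV[R]_n)) hZ normr0 mul0r.
Qed.

Lemma norm_funN x : N (- x) = N x.
Proof. case: hN => _ [hZ _]; by rewrite -scaleN1r hZ normrN normr1 mul1r. Qed.

Lemma norm_fun_ge0 x : 0 <= N x.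
Proof.
case: hN => _ [_ hT]; have := hT x (- x).
rewrite subrr norm_fun0 norm_funN; lra.
Qed.

Lemma norm_fun_sum (I : Type) (s : seq I) (F : I -> 'rV[R]_n) :
  N (\sum_(i <- s) F i) <= \sum_(i <- s) N (F i).
Proof.
case: hN => _ [_ hT].
elim: s => [|a s IH]; first by rewrite !big_nil norm_fun0.
by rewrite !big_cons; apply: le_trans (hT _ _) _; rewrite lerD2l.
Qed.

Lemma norm_fun_le_coord : exists2 C : R, 0 <= C &
  forall (x : 'rV[R]_n) (B : R), (forall i, `|x 0 i| <= B) -> N x <= C * B.
Proof.
case: hN => _ [hZ _].
exists (\sum_(j < n) N 'e_j); first by apply: sumr_ge0 => j _; apply: norm_fun_ge0.
move=> x B hB; rewrite {1}(row_sum_delta x).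
apply: le_trans (norm_fun_sum _ _) _.
rewrite mulr_suml; apply: ler_sum => j _; rewrite hZ mulrC.
by apply: ler_wpM2l; [exact: norm_fun_ge0 | exact: hB].
Qed.

Lemma coord_le_mxnorm (x : 'rV[R]_n) i : `|x 0 i| <= `|x|.
Proof.
have /mapP[j Hj ->] : `|x 0 i| \in [seq `|x k.1 k.2| | k : 'I_1 * 'I_n].
  by apply/mapP; exists (ord0, i) => //=; rewrite mem_enum.
rewrite [leRHS]/Num.Def.normr /= mx_normrE.
by apply/bigmax_geP; right => /=; exists j.
Qed.

Lemma norm_fun_continuous : continuous N.
Proof.
have [C C0 hC] := norm_fun_le_coord.
have hL x : N x <= C * `|x| by apply: hC => i; apply: coord_le_mxnorm.
case: hN => _ [_ hT] x.
apply: (proj2 (@cvgrPdist_le _ _ _ (nbhs x) _ N (N x))) => e e0.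
near=> y.
have h1 : N x <= N y + N (x - y) by have := hT y (x - y); rewrite addrC subrK.
have h2 : N y <= N x + N (x - y).
  by have := hT x (y - x); rewrite addrC subrK -opprB norm_funN.
have h3 : C * `|x - y| <= e.
  have C1 : 0 < C + 1 by rewrite ltr_wpDl.
  have : `|x - y| <= e / (C + 1).
    by near: y; apply: cvgr_dist_le => //; rewrite divr_gt0 // ltr_wpDl.
  move=> hxy; apply: le_trans (_ : (C + 1) * (e / (C + 1)) <= e).
    by apply: ler_pM => //; rewrite lerDl.
  by rewrite mulrC divfK // gt_eqF.
rewrite ler_norml; apply/andP; split; have := hL (x - y); lra.
Unshelve. all: by end_near.
Qed.

End NormFunctions.

Lemma coord_le_norm_fun (R : realType) (m : nat) (N : 'rV[R]_m.+1 -> R) :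
  is_norm N -> exists2 c : R, 0 < c & forall (x : 'rV[R]_m.+1) i, c * `|x 0 i| <= N x.
Proof.
move=> hN; case: (hN) => hz [hZ _].
pose S := [set x : 'rV[R]_m.+1 | `|x| = 1]%classic.
have S0 : (S !=set0)%classic.
  pose v : 'rV[R]_m.+1 := const_mx 1.
  have v0 : `|v| != 0.
    rewrite normr_eq0; apply/eqP => /matrixP /(_ 0 0).
    by rewrite !mxE => /eqP; rewrite oner_eq0.
  by exists (`|v|^-1 *: v); rewrite /S /= normrZ normfV normr_id mulVf.
have cS : compact S.
  apply: bounded_closed_compact.
    exists 1; split; first by rewrite num_real.
    by move=> M M1 x; rewrite /S /= => ->; apply: ltW.
  have -> : S = (Num.Def.normr @^-1` [set 1])%classic by [].
  apply: preimage_closed; last exact: closed_eq.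
  by move=> x _; apply: norm_continuous.
have [c cS' hc] :=
  EVT_min_rV S0 cS (continuous_subspaceT (norm_fun_continuous hN)).
have Sc : `|c| = 1 by move: cS'; rewrite inE.
have c0 : 0 < N c.
  rewrite lt_def norm_fun_ge0 // andbT; apply/eqP => /hz c0.
  by move: Sc; rewrite c0 normr0 => /eqP; rewrite eq_sym oner_eq0.
exists (N c) => // x i.
have [->|x0] := eqVneq x 0; first by rewrite mxE normr0 mulr0 norm_fun_ge0.
have nx0 : 0 < `|x| by rewrite normr_gt0.
have -> : N x = `|x| * N (`|x|^-1 *: x).
  by rewrite hZ normfV normr_id mulrA mulfV ?gt_eqF // mul1r.
rewrite mulrC; apply: ler_pM.
- exact: normr_ge0.
- exact: ltW.
- exact: coord_le_mxnorm.
- by apply: hc; rewrite inE /S /= normrZ normfV normr_id mulVf // gt_eqF.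
Qed.

Lemma is_norm_mulmx (R : realType) (n : nat) (N : 'rV[R]_n -> R) (P : 'M[R]_n) :
  P \in unitmx -> is_norm N -> is_norm (fun v => N (v *m P)).
Proof.
move=> Pu [hz [hZ hT]]; split; last split.
- by move=> v /hz h; rewrite -(mulmxK Pu v) h mul0mx.
- by move=> a v; rewrite -scalemxAl hZ.
- by move=> v w; rewrite mulmxDl hT.
Qed.

Lemma qform_mulmx (R : realType) (n : nat) (A P D : 'M[R]_n) (u : 'rV[R]_n) :
  P *m A *m P^T = D -> qform A (u *m P) = qform D u.
Proof. by move=> hP; rewrite /qform trmx_mul -hP !mulmxA. Qed.

Lemma qform_minkowski_diag (R : realType) (m : nat) (v : 'rV[R]_m.+2) :
  qform (minkowski_diag R m.+2) v =
  v 0 0 ^+ 2 - \sum_(j < m.+1) v 0 (lift ord0 j) ^+ 2.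
Proof.
rewrite /qform /minkowski_diag mul_mx_diag !mxE big_ord_recl /= !mxE /=.
rewrite -sumrN; congr (_ + _); first by rewrite mulr1 expr2.
by apply: eq_bigr => j _; rewrite !mxE /= mulrN1 expr2 mulNr.
Qed.

Section EuclideanSums.
Variable R : realType.

Lemma sum_sqr_eq1_le1 (k : nat) (G : 'I_k -> R) j :
  \sum_(i < k) G i ^+ 2 = 1 -> `|G j| <= 1.
Proof.
move=> G1; have : G j ^+ 2 <= 1.
  rewrite -G1 (bigD1 j) //= lerDl.
  by apply: sumr_ge0 => i _; apply: sqr_ge0.
by rewrite ler_norml => h; apply/andP; split; nra.
Qed.

Lemma unit_direction (k : nat) (b : 'I_k.+1 -> R) :
  exists G : 'I_k.+1 -> R, \sum_(j < k.+1) G j ^+ 2 = 1 /\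
    \sum_(j < k.+1) G j * b j = Num.sqrt (\sum_(j < k.+1) b j ^+ 2).
Proof.
set r2 := \sum_(j < k.+1) b j ^+ 2.
have r20 : 0 <= r2 by apply: sumr_ge0 => j _; apply: sqr_ge0.
have [r0 | r0] := eqVneq r2 0.
  exists (fun j : 'I_k.+1 => if (j : nat) == 0%N then 1 else 0); split.
    by rewrite big_ord_recl /= big1 ?addr0 ?expr1n // => j _; rewrite expr0n.
  have hb j : b j = 0.
    apply/eqP; rewrite -sqrf_eq0; apply/eqP.
    by apply: (psumr_eq0P _ r0) => // i _; apply: sqr_ge0.
  by rewrite r0 sqrtr0 big1 // => j _; rewrite hb mulr0.
set r := Num.sqrt r2.
have rr : r ^+ 2 = r2 by rewrite sqr_sqrtr.
have rn0 : r != 0 by rewrite sqrtr_eq0 -ltNge lt_def r0.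
exists (fun j => b j / r); split.
  under eq_bigr => j _ do rewrite expr_div_n.
  by rewrite -mulr_suml rr divff.
under eq_bigr => j _ do rewrite mulrAC -expr2.
by rewrite -mulr_suml -/r2 -rr expr2 mulfK.
Qed.

Lemma sqrt_sum_sqr_le (k : nat) (b : 'I_k -> R) (B : R) :
  0 <= B -> (forall j, `|b j| <= B) ->
  Num.sqrt (\sum_(j < k) b j ^+ 2) <= k%:R * B.
Proof.
move=> B0 hB.
have kB0 : 0 <= k%:R * B by rewrite mulr_ge0.
have k1 : k%:R <= (k%:R : R) ^+ 2 by case: k {b hB kB0} => [|k];
  rewrite ?expr0n // expr2 ler_peMl // ler1n.
rewrite -[leRHS](ger0_norm kB0) -sqrtr_sqr ler_sqrt ?sqr_ge0 //.
apply: (@le_trans _ _ (B ^+ 2 *+ k)).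
  rewrite -[X in _ *+ X](card_ord k) -sumr_const; apply: ler_sum => j _.
  by have := hB j; rewrite ler_norml => /andP[h1 h2]; nra.
by rewrite -mulr_natr exprMn mulrC ler_wpM2r ?sqr_ge0.
Qed.

End EuclideanSums.

Lemma minkowski_null_pair (R : realType) (m : nat) (e : 'rV[R]_m.+2) (B : R) :
  (forall i, `|e 0 i| <= B) ->
  exists u : 'rV[R]_m.+2,
    qform (minkowski_diag R m.+2) u = 0 /\
    qform (minkowski_diag R m.+2) (u - e) = 0 /\
    forall i, `|u 0 i| <= (m.+2)%:R * B.
Proof.
move=> hB; have B0 : 0 <= B by apply: le_trans (hB 0).
set a := e 0 0; pose b : 'I_m.+1 -> R := fun j => e 0 (lift ord0 j).
set r := Num.sqrt (\sum_(j < m.+1) b j ^+ 2).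
have r0 : 0 <= r by apply: sqrtr_ge0.
have rr : r ^+ 2 = \sum_(j < m.+1) b j ^+ 2.
  by rewrite sqr_sqrtr //; apply: sumr_ge0 => j _; apply: sqr_ge0.
have [G [G1 Gb]] := unit_direction b.
pose mu := (r - `|a|) / 2.
pose s := if 0 <= a then - mu else mu.
exists (\row_i (if unlift ord0 i is Some j then mu * G j else s)).
rewrite !qform_minkowski_diag !mxE unlift_none; split; last split.
- under eq_bigr => j _ do rewrite !mxE liftK exprMn.
  by rewrite -mulr_sumr G1 /s; case: ifP => _; ring.
- under eq_bigr => j _ do rewrite !mxE liftK.
  have -> : \sum_(j < m.+1) (mu * G j - e 0 (lift ord0 j)) ^+ 2 =
      mu ^+ 2 * \sum_(j < m.+1) G j ^+ 2 - 2 * mu * \sum_(j < m.+1) G j * b j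
      + r ^+ 2.
    rewrite rr !mulr_sumr -sumrB -big_split /=.
    by apply: eq_bigr => j _; rewrite /b; ring.
  rewrite G1 Gb -/r /s /mu -/a.
  by case: (lerP 0 a) => ha; rewrite ?(ger0_norm ha) ?(ltr0_norm ha); field.
- have hr : r <= (m.+1)%:R * B by apply: sqrt_sum_sqr_le => // j; apply: hB.
  have ha : `|a| <= B by apply: hB.
  have hmu : `|mu| <= (m.+2)%:R * B.
    rewrite -natr1 /mu normrM normfV (ger0_norm (ler0n R 2)).
    have := ler_normD r (- `|a|); rewrite normrN normr_id (ger0_norm r0).
    by move=> h; nra.
  move=> i; rewrite mxE; case: unliftP => [j _|_].
    by rewrite normrM; apply: le_trans hmu; rewrite ler_piMr ?sum_sqr_eq1_le1.
  by rewrite /s; case: ifP; rewrite ?normrN.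
Qed.

Lemma minkowski_diag_null_pair_bound (R : realType) (m : nat)
    (N : 'rV[R]_m.+2 -> R) : is_norm N ->
  exists M : R, 0 < M /\ forall e : 'rV[R]_m.+2, exists u : 'rV[R]_m.+2,
    qform (minkowski_diag R m.+2) u = 0 /\
    qform (minkowski_diag R m.+2) (u - e) = 0 /\ N u <= M * N e.
Proof.
move=> hN.
have [c c0 hc] := coord_le_norm_fun hN.
have [C C0 hC] := norm_fun_le_coord hN.
set k : R := (m.+2)%:R; have k0 : 0 < k by rewrite ltr0n.
exists ((C + 1) * k / c); split; first by rewrite !mulr_gt0 ?invr_gt0 ?ltr_wpDl.
move=> e; have he i : `|e 0 i| <= N e / c by rewrite ler_pdivlMr // mulrC hc.
have [u [hu [hue hub]]] := minkowski_null_pair he.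
exists u; split=> //; split=> //.
have t0 : 0 <= k * (N e / c).
  by rewrite !mulr_ge0 ?norm_fun_ge0 ?invr_ge0 ?ltW.
apply: le_trans (hC _ _ hub) _.
rewrite [X in _ <= X](_ : _ = (C + 1) * (k * (N e / c))); last first.
  by field; rewrite gt_eqF.
by rewrite ler_wpM2r // lerDl.
Qed.

Theorem lemma2p3 (R : realType) (n : nat) (A : 'M[R]_n) (N : 'rV[R]_n -> R) :
  (1 < n)%N -> signature_1_nm1 A -> is_norm N ->
  exists M : R, 0 < M /\
    forall x y : 'rV[R]_n, exists z : 'rV[R]_n,
      light_cone A x z /\ light_cone A y z /\ N (z - x) <= M * N (y - x).
Proof.
case: n A N => [|[|m]] A N // _ [_ [P [Pu hP]]] hN.
have [M [M0 hM]] :=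
  minkowski_diag_null_pair_bound (is_norm_mulmx Pu hN).
exists M; split=> // x y.
set e := (y - x) *m invmx P.
have he : e *m P = y - x by rewrite mulmxKV.
have [u hu] := hM e.
have Ezx : x + u *m P - x = u *m P by rewrite addrC addKr.
have Ezy : x + u *m P - y = (u - e) *m P.
  by rewrite mulmxBl he opprB [x + _]addrC -addrA.
exists (x + u *m P); rewrite /light_cone Ezx Ezy -he !(qform_mulmx _ hP).
exact: hu.
Qed.
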